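(* Let $\mathcal{M}$ be a finite $\mathcal{R}$-trivial monoid, let $E_1,\dots,E_p\in\mathbb{Z}\mathcal{M}$ be the complete system of primitive orthogonal idempotents produced by the algorithm described in the context, and let $R$ be a ring with $1\ne0$ having a complete system of primitive orthogonal idempotents $\epsilon_1,\dots,\epsilon_q\in R$. Let $\Theta:\mathbb{Z}\mathcal{M}\to R\mathcal{M}$ be the ring homomorphism $\Theta(\sum_\sigma r_\sigma\cdot\sigma)=\sum_\sigma\theta(r_\sigma)\cdot\sigma$, where $\theta:\mathbb{Z}\to R$ is the unique unital ring homomorphism, and set $\overline{E}_j:=\Theta(E_j)$. Then the elements $\epsilon_i\overline{E}_j$, $i=1,\dots,q$, $j=1,\dots,p$, form a complete system of primitive orthogonal idempotents of $R\mathcal{M}$.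
   Context: $\mathcal{M}$ is $\mathcal{R}$-trivial: $\sigma\mathcal{M}=\tau\mathcal{M}$ implies $\sigma=\tau$; unit $e$, $n=\#\mathcal{M}$. $R$ is an arbitrary (possibly noncommutative) ring with $1\ne0$; $R\mathcal{M}$ is the monoid algebra of formal sums $\sum_\mu r_\mu\cdot\mu$ with $(\sum_\sigma r_\sigma\cdot\sigma)(\sum_\tau s_\tau\cdot\tau)=\sum_\mu(\sum_{\sigma\tau=\mu}r_\sigma s_\tau)\cdot\mu$, and $r\in R$ identified with $r\cdot e$. A complete system of primitive orthogonal idempotents of a ring $A$ is a finite set of nonzero $E_1,\dots,E_p\in A$ with $E_i^2=E_i$, $E_iE_j=0$ for $i\ne j$, each $E_i$ primitive (if $E_i=X+Y$ with $X,Y\in A$, $X^2=X$, $Y^2=Y$, $XY=YX=0$ then $X=0$ or $Y=0$), and $\sum_iE_i=1_A$. The algorithm: fix a generating set $\mathcal{S}$ of $\mathcal{M}$; let $\mathcal{L}_\sigma:=\{\tau:\sigma\tau=\sigma\}$, $\mathcal{L}^{\mathcal{S}}_\sigma:=\mathcal{L}_\sigma\cap\mathcal{S}$; let $\sigma_1,\dots,\sigma_p$ represent the distinct sets $\mathcal{L}^{\mathcal{S}}_\sigma$ and $d_i:=\#\{\sigma:\mathcal{L}^{\mathcal{S}}_\sigma=\mathcal{L}^{\mathcal{S}}_{\sigma_i}\}$; set $T_i:=\prod_{\tau\in\mathcal{L}^{\mathcal{S}}_{\sigma_i}}\tau\prod_{\kappa\in\mathcal{S}\setminus\mathcal{L}^{\mathcal{S}}_{\sigma_i}}(e-\kappa)\in\mathbb{Z}\mathcal{M}$;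 with $\mathcal{P}_{a,b}(X):=e-(e-X^a)^b$, set $E_1:=\mathcal{P}_{a_1,b_1}(T_1)$ and recursively $Q_m:=T_m-\sum_{i<m}T_mE_i-\sum_{i<m}E_iT_m+\sum_{i,j<m}E_iT_mE_j$, $E_m:=\mathcal{P}_{a_m,b_m}(Q_m)$, where $a_m\ge n-d_m$ and $b_m\ge d_m$ are arbitrary nonnegative integers. *)

From HB Require Import structures.
From mathcomp Require Import all_boot all_order all_algebra.
Set Implicit Arguments.
Unset Strict Implicit.
Unset Printing Implicit Defensive.
Import GRing.Theory.
Local Open Scope ring_scope.

Definition primitive_idem (A : zmodType) (mul : A -> A -> A) (x : A) : Prop :=
  forall X Y : A, mul X X = X -> mul Y Y = Y -> mul X Y = 0 -> mul Y X = 0 ->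
    x = X + Y -> X = 0 \/ Y = 0.

Definition cspoi (A : zmodType) (mul : A -> A -> A) (one : A)
    (I : finType) (E : I -> A) : Prop :=
  [/\ (forall i, E i <> 0),
      (forall i, mul (E i) (E i) = E i),
      (forall i j, i <> j -> mul (E i) (E j) = 0),
      (forall i, primitive_idem mul (E i)) &
      \sum_(i : I) E i = one].

Definition R_trivial (T : finType) (mul : T -> T -> T) : Prop :=
  forall s t : T, [set mul s m | m : T] = [set mul t m | m : T] -> s = t.

Definition generates (T : finType) (mul : T -> T -> T) (e : T) (S : {set T}) :
  Prop := forall m : T, exists2 l : seq T, all (fun x => x \in S) l & m = foldr mul e l.

Definition Lset (T : finType) (mul : T -> T -> T) (s : T) : {set T} :=
  [set t | mul s t == s].
Definition LS (T : finType) (mul : T -> T -> T) (S : {set T}) (s : T) : {set T} :=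
  Lset mul s :&: S.

(* ---------- Monoid algebra R M: formal sums = finitely supported functions
   T -> R (T is finite), with convolution product. *)

Definition malg_mul (T : finType) (mul : T -> T -> T) {R : nzRingType}
    (f g : {ffun T -> R}) : {ffun T -> R} :=
  [ffun m => \sum_(s : T) \sum_(t : T | mul s t == m) f s * g t].

Definition malg_one (T : finType) (e : T) {R : nzRingType} : {ffun T -> R} :=
  [ffun m => (m == e)%:R].

Definition malg_scal (T : finType) (e : T) {R : nzRingType} (r : R) : {ffun T -> R} :=
  [ffun m => if m == e then r else 0].

Definition malg_of (T : finType) {R : nzRingType} (m : T) : {ffun T -> R} :=
  [ffun x => (x == m)%:R].

Fixpoint malg_pow (T : finType) (mul : T -> T -> T) (e : T) {R : nzRingType}
    (f : {ffun T -> R}) (n : nat) : {ffun T -> R} :=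
  match n with
  | 0 => @malg_one T e R
  | n'.+1 => malg_mul mul f (malg_pow mul e f n')
  end.

Definition malg_prod (T : finType) (mul : T -> T -> T) (e : T) {R : nzRingType}
    (s : seq {ffun T -> R}) : {ffun T -> R} :=
  foldr (malg_mul mul) (@malg_one T e R) s.

(* Theta : Z M -> R M, induced by the unique unital ring map Z -> R *)
Definition malg_cast (T : finType) (R : nzRingType) (f : {ffun T -> int}) :
  {ffun T -> R} := [ffun m => (f m)%:~R].

Definition Pab (T : finType) (mul : T -> T -> T) (e : T) (a b : nat)
    (X : {ffun T -> int}) : {ffun T -> int} :=
  @malg_one T e int - malg_pow mul e (@malg_one T e int - malg_pow mul e X a) b.

Definition Tterm (T : finType) (mul : T -> T -> T) (e : T) (lt lk : seq T) :
  {ffun T -> int} :=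
  malg_mul mul (malg_prod mul e [seq @malg_of T int t | t <- lt])
               (malg_prod mul e [seq @malg_one T e int - @malg_of T int k | k <- lk]).

(* Q_m built from T_m and the E_i, i < m (0-based indices) *)
Definition Qterm (T : finType) (mul : T -> T -> T) (p : nat)
    (Tm : {ffun T -> int}) (E : 'I_p -> {ffun T -> int}) (m : 'I_p) :
  {ffun T -> int} :=
  Tm - \sum_(i < p | (i < m)%N) malg_mul mul Tm (E i)
     - \sum_(i < p | (i < m)%N) malg_mul mul (E i) Tm
     + \sum_(i < p | (i < m)%N) \sum_(j < p | (j < m)%N)
          malg_mul mul (malg_mul mul (E i) Tm) (E j).

Definition dnum (T : finType) (mul : T -> T -> T) (S : {set T}) (s : T) : nat :=
  #|[set x : T | LS mul S x == LS mul S s]|.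

Definition representatives (T : finType) (mul : T -> T -> T) (S : {set T})
    (p : nat) (sig : 'I_p -> T) : Prop :=
  injective (fun i => LS mul S (sig i)) /\
  (forall s : T, exists i : 'I_p, LS mul S s = LS mul S (sig i)).

(* E is an output of the algorithm, for the generating set S, the
   representatives sig (in this order), some orderings of the factors of the
   products T_i, and some admissible a_m, b_m. *)
Definition algorithm_output (T : finType) (mul : T -> T -> T) (e : T)
    (S : {set T}) (p : nat) (sig : 'I_p -> T) (E : 'I_p -> {ffun T -> int}) :
  Prop :=
  exists (lt lk : 'I_p -> seq T) (a b : 'I_p -> nat),
  [/\ (forall i, perm_eq (lt i) (enum (LS mul S (sig i)))),
      (forall i, perm_eq (lk i) (enum (S :\: LS mul S (sig i)))),
      (forall m, (#|T| - dnum mul S (sig m) <= a m)%N),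
      (forall m, (dnum mul S (sig m) <= b m)%N) &
      (forall m, E m = Pab mul e (a m) (b m)
                         (Qterm mul (Tterm mul e (lt m) (lk m)) E m))].

From HB Require Import structures.
From mathcomp Require Import all_boot all_order all_algebra.
Set Implicit Arguments.
Unset Strict Implicit.
Unset Printing Implicit Defensive.
Import GRing.Theory.
Local Open Scope ring_scope.

(* For s in M, the coefficient sum
   chi_s(f) = sum_{s t = s} f(t) is a character R M -> R since M is
   R-trivial, and depends only on the class L^S_s.  The key tool is a
   nilpotency lemma: if every chi_t(x) is 0 or 1, then x^i (1-x)^j = 0 once
   i, j bound the numbers of t with chi_t(x) = 0, resp. 1 (induction down
   the right ideals s M); so an idempotent killed by all characters is 0.
   Hence P_{a,b} turns each Q_j into an idempotent, and induction along the
   algorithm shows that the E_j are orthogonal idempotents summing to 1 with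
   chi_t(E_j) = [t in class j].  The ring morphism Theta transfers this to
   R M, products with the eps_i stay orthogonal idempotents, and primitivity
   is read through chi_{sigma_j}, which maps eps_i Theta(E_j) to eps_i. *)

Section IdempotentPolynomial.
Variable A : nzRingType.

Definition Ppoly (x : A) (a b : nat) : A := 1 - (1 - x ^+ a) ^+ b.

(* If x^a (1-x)^b = 0 then P_{a,b}(x) is idempotent: writing
   1 - x^a = (1-x) h and 1 - (1-x^a)^b = x^a s, the defect
   (1-x^a)^b (1-(1-x^a)^b) = (1-x)^b h^b x^a s vanishes, all factors
   being polynomials in x. *)
Lemma Ppoly_idem (x : A) a b : x ^+ a * (1 - x) ^+ b = 0 ->
  Ppoly x a b * Ppoly x a b = Ppoly x a b.
Proof.
move=> nil; rewrite /Ppoly; set v := 1 - x ^+ a.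
set h := \sum_(i < a) x ^+ i; set s := \sum_(i < b) v ^+ i.
have cxh : GRing.comm x h by apply: commr_sum => i _; apply/commrX/commr_refl.
have c1xh : GRing.comm (1 - x) h.
  by apply/commr_sym/commrB; [exact: commr1 | exact/commr_sym].
have v_fact : v ^+ b = (1 - x) ^+ b * h ^+ b.
  by rewrite -exprMn_comm // /v /h -opprB subrX1 -mulNr opprB.
have Pv_fact : 1 - v ^+ b = x ^+ a * s.
  rewrite -opprB subrX1 -mulNr opprB /v; congr (_ * _).
  by rewrite opprB addrC subrK.
have c1 : GRing.comm (h ^+ b) (x ^+ a) by apply/commrX/commr_sym/commrX/commr_sym.
have c2 : GRing.comm ((1 - x) ^+ b) (x ^+ a).
  by apply/commrX/commr_sym/commrX/commrB; [exact: commr1 | exact: commr_refl].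
rewrite mulrBl mul1r [X in _ - X](_ : _ = 0) ?subr0 //.
rewrite Pv_fact v_fact -mulrA [h ^+ b * _]mulrA c1 -[_ * h ^+ b * s]mulrA.
by rewrite [(1 - x) ^+ b * _]mulrA c2 nil mul0r.
Qed.

(* For a > 0, P_{a,b}(Q) has no constant term, so it inherits one-sided
   annihilators of Q. *)
Lemma Ppoly_annihilated_l (y x : A) a b : (0 < a)%N -> y * x = 0 ->
  y * Ppoly x a b = 0.
Proof.
move=> a_gt0 yx0; have hv : y * (1 - x ^+ a) = y.
  by case: a a_gt0 => // a _; rewrite mulrBr mulr1 exprS mulrA yx0 mul0r subr0.
have hvb : y * (1 - x ^+ a) ^+ b = y.
  by elim: b => [|b IH]; rewrite ?expr0 ?mulr1 // exprSr mulrA IH hv.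
by rewrite /Ppoly mulrBr mulr1 hvb subrr.
Qed.

Lemma Ppoly_annihilated_r (y x : A) a b : (0 < a)%N -> x * y = 0 ->
  Ppoly x a b * y = 0.
Proof.
move=> a_gt0 xy0; have hv : (1 - x ^+ a) * y = y.
  by case: a a_gt0 => // a _; rewrite mulrBl mul1r exprSr -mulrA xy0 mulr0 subr0.
have hvb : (1 - x ^+ a) ^+ b * y = y.
  by elim: b => [|b IH]; rewrite ?expr0 ?mul1r // exprS -mulrA IH hv.
by rewrite /Ppoly mulrBl mul1r hvb subrr.
Qed.

Lemma powers_peel_one (x : A) i j :
  x ^+ i * (1 - x) ^+ j.+1 = (1 - x) * (x ^+ i * (1 - x) ^+ j).
Proof.
have hc : x ^+ i * (1 - x) = (1 - x) * x ^+ i.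
  by rewrite mulrBr mulrBl mulr1 mul1r -exprSr exprS.
by rewrite exprS mulrA hc -mulrA.
Qed.

End IdempotentPolynomial.

Lemma rmorph_Ppoly (A B : nzRingType) (f : {rmorphism A -> B}) (x : A) a b :
  f (Ppoly x a b) = Ppoly (f x) a b.
Proof. by rewrite /Ppoly rmorphB rmorph1 rmorphXn rmorphB rmorph1 rmorphXn. Qed.

Lemma orthogonal_products (A : nzRingType) (I J : finType) (g : I -> A) (f : J -> A) :
  (forall i, g i * g i = g i) -> (forall i i', i != i' -> g i * g i' = 0) ->
  \sum_i g i = 1 ->
  (forall j, f j * f j = f j) -> (forall j j', j != j' -> f j * f j' = 0) ->
  \sum_j f j = 1 ->
  (forall i j, f j * g i = g i * f j) ->
  [/\ forall k : I * J, g k.1 * f k.2 * (g k.1 * f k.2) = g k.1 * f k.2,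
      forall k k' : I * J, k != k' -> g k.1 * f k.2 * (g k'.1 * f k'.2) = 0 &
      \sum_(k : I * J) g k.1 * f k.2 = 1].
Proof.
move=> gidem gorth gsum fidem forth fsum comm.
have prodE i j i' j' : g i * f j * (g i' * f j') = g i * g i' * (f j * f j').
  by rewrite -mulrA [f j * _]mulrA comm -!mulrA.
split.
- by move=> [i j]; rewrite prodE gidem fidem.
- move=> [i j] [i' j'] neq; rewrite prodE.
  have [eii|ii'] := eqVneq i i'; last by rewrite gorth ?mul0r.
  have [ejj|jj'] := eqVneq j j'; last by rewrite forth ?mulr0.
  by subst i' j'; rewrite eqxx in neq.
- rewrite -(pair_bigA _ (fun i j => g i * f j)) /=.
  under eq_bigr do rewrite -mulr_sumr fsum mulr1.
  exact: gsum.
Qed.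

Section MonoidAlgebra.
Variables (T : finType) (mul : T -> T -> T) (e : T).
Hypotheses (mulA : associative mul) (mul1m : left_id e mul) (mulm1 : right_id e mul).

Section Coefficients.
Variable R : nzRingType.

(* The monoid algebra R M, as a type alias of {ffun T -> R} carrying the
   convolution ring structure (its ring axioms need the monoid axioms). *)
Definition malg of associative mul & left_id e mul & right_id e mul : Type :=
  {ffun T -> R}.
Local Notation RM := (malg mulA mul1m mulm1).
HB.instance Definition _ := GRing.Zmodule.copy RM {ffun T -> R}.

Lemma malg_mul_coef (f g : {ffun T -> R}) m : malg_mul mul f g m =
  \sum_s \sum_t (if mul s t == m then f s * g t else 0).
Proof. by rewrite ffunE; apply: eq_bigr => s _; rewrite big_mkcond. Qed.

Lemma sum_delta (F : T -> R) x : \sum_u (if x == u then F u else 0) = F x.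
Proof.
rewrite (bigD1 x) //= eqxx big1 ?addr0 // => u /negPf hu.
by rewrite eq_sym hu.
Qed.

Lemma sum_if (I : finType) (c : bool) (F : I -> R) :
  (if c then \sum_i F i else 0) = \sum_i (if c then F i else 0).
Proof. by case: c => //; rewrite big1. Qed.

Lemma sum_reorder4 (F : T -> T -> T -> T -> R) :
  \sum_u \sum_w \sum_s \sum_t F u w s t = \sum_s \sum_t \sum_w \sum_u F u w s t.
Proof.
transitivity (\sum_w \sum_s \sum_t \sum_u F u w s t).
  rewrite exchange_big; apply: eq_bigr => w _; rewrite exchange_big.
  by apply: eq_bigr => s _; rewrite exchange_big.
by rewrite exchange_big; apply: eq_bigr => s _; rewrite exchange_big.
Qed.

Lemma sum_reorder3 (F : T -> T -> T -> R) :
  \sum_v \sum_t \sum_w F v t w = \sum_t \sum_w \sum_v F v t w.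
Proof. by rewrite exchange_big; apply: eq_bigr => t _; rewrite exchange_big. Qed.

(* Both bracketings of f g h have, at m, the coefficient
   sum_{s t w = m} f s * g t * h w. *)
Lemma malg_mulA : associative (malg_mul mul : RM -> RM -> RM).
Proof.
move=> f g h; apply/ffunP => m; symmetry; rewrite !malg_mul_coef.
transitivity (\sum_s \sum_t \sum_w
   (if mul (mul s t) w == m then f s * g t * h w else 0)).
  transitivity (\sum_u \sum_w \sum_s \sum_t
     (if (mul u w == m) && (mul s t == u) then f s * g t * h w else 0)).
    apply: eq_bigr => u _; apply: eq_bigr => w _; rewrite malg_mul_coef.
    rewrite mulr_suml sum_if; apply: eq_bigr => s _.
    rewrite mulr_suml sum_if; apply: eq_bigr => t _.
    by case: (mul u w == m); case: (mul s t == u); rewrite ?mul0r.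
  rewrite sum_reorder4; apply: eq_bigr => s _; apply: eq_bigr => t _.
  apply: eq_bigr => w _.
  rewrite -(sum_delta (fun u => if mul u w == m then f s * g t * h w else 0)).
  by apply: eq_bigr => u _; case: (mul s t == u); rewrite ?andbF ?andbT.
apply: eq_bigr => s _.
transitivity (\sum_v \sum_t \sum_w
   (if (mul s v == m) && (mul t w == v) then f s * (g t * h w) else 0)).
  rewrite sum_reorder3; apply: eq_bigr => t _; apply: eq_bigr => w _.
  rewrite -mulA -mulrA.
  rewrite -(sum_delta (fun v => if mul s v == m then f s * (g t * h w) else 0)).
  by apply: eq_bigr => v _; case: (mul t w == v); rewrite ?andbF ?andbT.
apply: eq_bigr => v _; rewrite malg_mul_coef mulr_sumr sum_if.
apply: eq_bigr => t _; rewrite mulr_sumr sum_if; apply: eq_bigr => w _.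
by case: (mul s v == m); case: (mul t w == v); rewrite ?mulr0.
Qed.

Lemma malg_mul1l : left_id (malg_one e) (malg_mul mul : RM -> RM -> RM).
Proof.
move=> f; apply/ffunP => m; rewrite malg_mul_coef (bigD1 e) //=.
rewrite [X in _ + X]big1 => [|s /negPf hs].
  rewrite addr0 -(sum_delta f m); apply: eq_bigr => t _.
  by rewrite mul1m ffunE eqxx mul1r eq_sym.
by apply: big1 => t _; rewrite ffunE hs mul0r; case: ifP.
Qed.

Lemma malg_mul1r : right_id (malg_one e) (malg_mul mul : RM -> RM -> RM).
Proof.
move=> f; apply/ffunP => m; rewrite malg_mul_coef -(sum_delta f m).
apply: eq_bigr => s _; rewrite (bigD1 e) //= [X in _ + X]big1 => [|t /negPf ht].
  by rewrite addr0 mulm1 ffunE eqxx mulr1 eq_sym.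
by rewrite ffunE ht mulr0; case: ifP.
Qed.

Lemma malg_mulDl : left_distributive (malg_mul mul : RM -> RM -> RM) +%R.
Proof.
move=> f g h; apply/ffunP => m; rewrite [in RHS]ffunE !malg_mul_coef -big_split.
apply: eq_bigr => s _; rewrite -big_split; apply: eq_bigr => t _.
by rewrite ffunE; case: ifP => _ /=; rewrite ?mulrDl ?addr0.
Qed.

Lemma malg_mulDr : right_distributive (malg_mul mul : RM -> RM -> RM) +%R.
Proof.
move=> f g h; apply/ffunP => m; rewrite [in RHS]ffunE !malg_mul_coef -big_split.
apply: eq_bigr => s _; rewrite -big_split; apply: eq_bigr => t _.
by rewrite ffunE; case: ifP => _ /=; rewrite ?mulrDr ?addr0.
Qed.

Lemma malg_one_neq0 : (malg_one e : RM) != 0.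
Proof. by apply/eqP => /ffunP /(_ e); rewrite !ffunE eqxx; apply/eqP/oner_neq0. Qed.

HB.instance Definition _ := GRing.Zmodule_isNzRing.Build RM
  malg_mulA malg_mul1l malg_mul1r malg_mulDl malg_mulDr malg_one_neq0.

Lemma malg_mulE (f g : RM) : f * g = malg_mul mul f g. Proof. by []. Qed.

Definition scal (r : R) : RM := malg_scal e r.
Definition basis (s : T) : RM := malg_of s.

Lemma one_basis : 1 = basis e.
Proof. by apply/ffunP => m; rewrite !ffunE. Qed.

Lemma scal_mul_coef r (f : RM) m : (scal r * f) m = r * f m.
Proof.
rewrite malg_mulE malg_mul_coef (bigD1 e) //= [X in _ + X]big1 => [|u /negPf hu].
  rewrite addr0 -(sum_delta f m) mulr_sumr; apply: eq_bigr => t _.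
  by rewrite mul1m ffunE eqxx eq_sym; case: ifP; rewrite ?mulr0.
by apply: big1 => t _; rewrite ffunE hu mul0r; case: ifP.
Qed.

Lemma mul_scal_coef r (f : RM) m : (f * scal r) m = f m * r.
Proof.
rewrite malg_mulE malg_mul_coef -(sum_delta (fun t => f t * r) m).
apply: eq_bigr => s _; rewrite (bigD1 e) //= [X in _ + X]big1 => [|u /negPf hu].
  by rewrite addr0 mulm1 ffunE eqxx eq_sym; case: ifP.
by rewrite ffunE hu mulr0; case: ifP.
Qed.

Lemma scal_is_zmod_morphism : zmod_morphism scal.
Proof.
by move=> r r'; apply/ffunP => m; rewrite !ffunE; case: (m == e); rewrite ?subr0.
Qed.

Lemma scal_is_monoid_morphism : monoid_morphism scal.
Proof.
split; first by apply/ffunP => m; rewrite !ffunE; case: (m == e).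
move=> r r'; apply/ffunP => m; rewrite scal_mul_coef !ffunE.
by case: (m == e); rewrite ?mulr0.
Qed.

HB.instance Definition _ := GRing.isZmodMorphism.Build R RM scal scal_is_zmod_morphism.
HB.instance Definition _ := GRing.isMonoidMorphism.Build R RM scal scal_is_monoid_morphism.

Lemma basis_mul s (f : RM) : basis s * f = \sum_t scal (f t) * basis (mul s t).
Proof.
apply/ffunP => m; rewrite malg_mulE malg_mul_coef (bigD1 s) //=.
rewrite [X in _ + X]big1 => [|u /negPf hu].
  rewrite addr0 sum_ffunE; apply: eq_bigr => t _.
  rewrite scal_mul_coef !ffunE eqxx mul1r eq_sym.
  by case: (m == mul s t); rewrite ?mulr1 ?mulr0.
by apply: big1 => t _; rewrite ffunE hu mul0r; case: ifP.
Qed.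

Lemma basis_scal s r : basis s * scal r = scal r * basis s.
Proof.
apply/ffunP => m; rewrite scal_mul_coef basis_mul sum_ffunE.
rewrite (bigD1 e) //= [X in _ + X]big1 => [|t /negPf ht].
  by rewrite addr0 scal_mul_coef mulm1 ffunE eqxx.
by rewrite scal_mul_coef ffunE ht mul0r.
Qed.

(* chi_s(f) sums the coefficients of f over the right stabiliser
   L_s = {t | s t = s}; it is the coefficient of s in s . f when M is
   R-trivial, and then a character (ring morphism R M -> R). *)
Definition chi (s : T) (f : RM) : R := \sum_(t | mul s t == s) f t.

Lemma chi_is_zmod_morphism s : zmod_morphism (chi s).
Proof. by move=> f g; rewrite /chi -sumrB; apply: eq_bigr => t _; rewrite !ffunE. Qed.

HB.instance Definition _ s :=
  GRing.isZmodMorphism.Build RM R (chi s) (chi_is_zmod_morphism s).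

Lemma chi_scal s r : chi s (scal r) = r.
Proof.
rewrite /chi (bigD1 e) ?mulm1 //= ffunE eqxx big1 ?addr0 // => t /andP [_ /negPf ht].
by rewrite ffunE ht.
Qed.

Lemma chi_basis s t : chi s (basis t) = (mul s t == s)%:R.
Proof.
rewrite /chi; case hst: (mul s t == s).
  rewrite (bigD1 t) //= ffunE eqxx big1 ?addr0 // => u /andP [_ /negPf hu].
  by rewrite ffunE hu.
by apply: big1 => u hu; rewrite ffunE; case: eqP => // eu; rewrite -eu hu in hst.
Qed.

Lemma basis_mul_split s (x : RM) : basis s * x =
  scal (chi s x) * basis s + \sum_(t | mul s t != s) scal (x t) * basis (mul s t).
Proof.
rewrite basis_mul (bigID (fun t => mul s t == s)) /=; congr (_ + _).
by rewrite /chi rmorph_sum mulr_suml; apply: eq_bigr => t /eqP ->.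
Qed.

Lemma basis_annihilate s (x W : RM) :
  (forall t, mul s t != s -> basis (mul s t) * W = 0) ->
  basis s * ((x - scal (chi s x)) * W) = 0.
Proof.
move=> hW; rewrite mulrA mulrBr basis_mul_split basis_scal addrAC subrr add0r.
by rewrite mulr_suml big1 // => t ht; rewrite -mulrA hW ?mulr0.
Qed.

Lemma malg_powE (f : RM) n : malg_pow mul e f n = f ^+ n.
Proof. by elim: n => // n IH; rewrite exprS /= IH. Qed.

Lemma malg_prodE (l : seq RM) : malg_prod mul e l = \prod_(x <- l) x.
Proof. by elim: l => [|x l IH]; rewrite ?big_nil ?big_cons //= IH. Qed.

End Coefficients.

Hypothesis Rtriv : R_trivial mul.

Definition ideal (s : T) : {set T} := [set mul s m | m : T].

Lemma ideal_self s : s \in ideal s.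
Proof. by apply/imsetP; exists e => //; rewrite mulm1. Qed.

Lemma ideal_e : ideal e = setT.
Proof. by apply/setP => t; rewrite inE; apply/imsetP; exists t => //; rewrite mul1m. Qed.

Lemma ideal_mul_sub s t : ideal (mul s t) \subset ideal s.
Proof.
by apply/subsetP => u /imsetP [m _ ->]; apply/imsetP; exists (mul t m); rewrite ?mulA.
Qed.

Lemma ideal_mul_eq s t : s \in ideal (mul s t) -> mul s t = s.
Proof.
case/imsetP => m _ hm; apply: Rtriv; apply/eqP; rewrite eqEsubset ideal_mul_sub /=.
apply/subsetP => u /imsetP [w _ ->]; apply/imsetP; exists (mul m w) => //.
by rewrite mulA -hm.
Qed.

Lemma stab_mul s a b : (mul s (mul a b) == s) = (mul s a == s) && (mul s b == s).
Proof.
apply/idP/idP => [/eqP hab | /andP [/eqP ha /eqP hb]]; last by rewrite mulA ha hb.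
have ha : mul s a = s.
  by apply: ideal_mul_eq; apply/imsetP; exists b => //; rewrite -mulA hab.
by rewrite ha eqxx /= -{1}ha -mulA hab.
Qed.

Definition count_ideal (P : pred T) (s : T) : nat := #|[set u in ideal s | P u]|.

Lemma count_ideal_mul (P : pred T) s t : (count_ideal P (mul s t) <= count_ideal P s)%N.
Proof.
apply: subset_leq_card; apply/subsetP => u; rewrite !inE => /andP [hu ->].
by rewrite andbT (subsetP (ideal_mul_sub s t)).
Qed.

Lemma count_ideal_mul_lt (P : pred T) s t : mul s t != s -> P s ->
  (count_ideal P (mul s t) < count_ideal P s)%N.
Proof.
move=> hst hP; rewrite /count_ideal (cardsD1 s [set u in ideal s | P u]).
rewrite inE ideal_self hP /= add1n ltnS; apply: subset_leq_card.
apply/subsetP => u; rewrite !inE => /andP [hu ->].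
rewrite andbT (subsetP (ideal_mul_sub s t)) // andbT.
by apply: contraNneq hst => eu; rewrite -eu in hu *; rewrite (ideal_mul_eq hu).
Qed.

(* By R-triviality the ideal strictly shrinks when s t <> s, which allows
   induction on #|s M|. *)
Lemma card_ideal_mul_lt s t : mul s t != s -> (#|ideal (mul s t)| < #|ideal s|)%N.
Proof.
move=> hst; apply: proper_card; rewrite properE ideal_mul_sub /=.
apply/subsetPn; exists s; first exact: ideal_self.
by apply/negP => /ideal_mul_eq /eqP; rewrite (negPf hst).
Qed.

Section Characters.
Variable R : nzRingType.
Local Notation RM := (malg R mulA mul1m mulm1).
Local Notation chi := (@chi R).
Local Notation basis := (basis R).

(* As L_s is closed under products and factors, chi_s is multiplicative:
   it is a character of R M. *)
Lemma chi_is_monoid_morphism s : monoid_morphism (chi s).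
Proof.
split; first by rewrite one_basis chi_basis mulm1 eqxx.
move=> f g; rewrite /chi big_distrlr /=.
have -> : \sum_(a | mul s a == s) \sum_(b | mul s b == s) f a * g b =
    \sum_a \sum_b (if (mul s a == s) && (mul s b == s) then f a * g b else 0).
  rewrite big_mkcond; apply: eq_bigr => a _; rewrite big_mkcond sum_if.
  by apply: eq_bigr => b _; case: (mul s a == s); case: (mul s b == s).
transitivity (\sum_m \sum_a \sum_b
   (if (mul s m == s) && (mul a b == m) then f a * g b else 0)).
  rewrite big_mkcond; apply: eq_bigr => m _; rewrite malg_mulE malg_mul_coef sum_if.
  by apply: eq_bigr => a _; rewrite sum_if; apply: eq_bigr => b _; case: (mul s m == s).
rewrite exchange_big; apply: eq_bigr => a _; rewrite exchange_big; apply: eq_bigr => b _.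
rewrite -stab_mul -(sum_delta (fun m => if mul s m == s then f a * g b else 0) (mul a b)).
by apply: eq_bigr => m _; case: (mul a b == m); rewrite ?andbT ?andbF.
Qed.

HB.instance Definition _ s :=
  GRing.isMonoidMorphism.Build RM R (chi s) (chi_is_monoid_morphism s).

Section Nilpotency.
Variables (x : RM) (c : pred T).
Hypothesis chi_x : forall t, chi t x = (c t)%:R.

(* By induction along the
   ideal s M: the factor x - chi_s(x) moves s strictly down (basis_annihilate),
   and consumes one of the elements counted. *)
Lemma basis_nilpotent s i j :
  (count_ideal (predC c) s <= i)%N -> (count_ideal c s <= j)%N ->
  basis s * (x ^+ i * (1 - x) ^+ j) = 0.
Proof.
have [n] := ubnP #|ideal s|; elim: n s i j => // n IH s i j hn hi hj.
have IHbelow t i' j' : mul s t != s -> (count_ideal (predC c) (mul s t) <= i')%N ->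
    (count_ideal c (mul s t) <= j')%N -> basis (mul s t) * (x ^+ i' * (1 - x) ^+ j') = 0.
  move=> hst; apply: IH; apply: leq_trans (card_ideal_mul_lt hst) _.
  by rewrite -ltnS.
have count_pos (P : pred T) : P s -> (0 < count_ideal P s)%N.
  by move=> hP; rewrite card_gt0; apply/set0Pn; exists s; rewrite inE ideal_self.
case cs: (c s).
- case: j hj => [|j] hj; first by have := leq_trans (count_pos _ cs) hj.
  have one_sub : 1 - x = - (x - scal (chi s x)) by rewrite chi_x cs rmorph1 opprB.
  rewrite powers_peel_one {1}one_sub mulNr mulrN basis_annihilate ?oppr0 // => t hst.
  apply: IHbelow => //; first exact: leq_trans (count_ideal_mul _ _ _) hi.
  by rewrite -ltnS; apply: leq_trans hj; apply: count_ideal_mul_lt.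
- case: i hi => [|i] hi; first by have := leq_trans (count_pos (predC c) (negbT cs)) hi.
  have -> : x ^+ i.+1 * (1 - x) ^+ j = (x - scal (chi s x)) * (x ^+ i * (1 - x) ^+ j).
    by rewrite chi_x cs rmorph0 subr0 exprS mulrA.
  apply: basis_annihilate => t hst; apply: IHbelow => //.
    by rewrite -ltnS; apply: leq_trans hi; apply: count_ideal_mul_lt => //; rewrite inE cs.
  exact: leq_trans (count_ideal_mul _ _ _) hj.
Qed.

Lemma nilpotent (i j : nat) : (#|T| - #|[set t | c t]| <= i)%N ->
  (#|[set t | c t]| <= j)%N -> x ^+ i * (1 - x) ^+ j = 0.
Proof.
move=> hi hj; rewrite -[LHS]mul1r one_basis.
apply: basis_nilpotent; rewrite /count_ideal ideal_e.
  apply: leq_trans hi; rewrite -(cardsC [set t | c t]) addKn.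
  by apply: subset_leq_card; apply/subsetP => t; rewrite !inE.
by apply: leq_trans hj; apply: subset_leq_card; apply/subsetP => t; rewrite !inE.
Qed.

End Nilpotency.

Lemma idem_chi0 (x : RM) : x * x = x -> (forall t, chi t x = 0) -> x = 0.
Proof.
move=> hx hc; have xn : forall n, x ^+ n.+1 = x.
  by elim=> // n IH; rewrite exprS IH hx.
have T_gt0 : (0 < #|T|)%N by apply/card_gt0P; exists e.
rewrite -(xn #|T|.-1) (prednK T_gt0) -[_ ^+ _]mulr1 -(expr0 (1 - x)).
apply: (nilpotent (c := pred0)) => [t||]; first by rewrite hc.
  by rewrite leq_subr.
by rewrite leqn0 cards_eq0; apply/eqP/setP => t; rewrite !inE.
Qed.

End Characters.

Section Classes.
Variables (S : {set T}) (genS : generates mul e S).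

(* Since S generates M and L_s is closed under products and factors,
   L_s is determined by L^S_s = L_s :&: S. *)
Lemma stab_LS s s' t : LS mul S s = LS mul S s' -> (mul s t == s) = (mul s' t == s').
Proof.
move=> eqLS; have [l lS ->] := genS t; elim: l lS => [|x l IH] /=.
  by rewrite !mulm1 !eqxx.
case/andP => xS lS; rewrite !stab_mul IH //.
have : (x \in LS mul S s) = (x \in LS mul S s') by rewrite eqLS.
by rewrite !inE xS !andbT => ->.
Qed.

Lemma chi_LS (R : nzRingType) (f : malg R mulA mul1m mulm1) s s' :
  LS mul S s = LS mul S s' -> chi s f = chi s' f.
Proof. by move=> eqLS; apply: eq_bigl => t; rewrite (stab_LS t eqLS). Qed.

Variables (p : nat) (sig : 'I_p -> T).
Hypothesis sig_repr : representatives mul S sig.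

Definition cls (t : T) (j : 'I_p) : bool := LS mul S t == LS mul S (sig j).

Lemma cls_sig i j : cls (sig i) j = (i == j).
Proof. by apply/eqP/eqP => [/sig_repr.1|->]. Qed.

Lemma cls_uniq t i j : cls t i -> cls t j -> i = j.
Proof. by move=> /eqP ti /eqP; rewrite ti => /sig_repr.1. Qed.

Lemma cls_partition t : \sum_j ((cls t j)%:R : int) = 1.
Proof.
have [i ti] := sig_repr.2 t; have {}ti : cls t i by apply/eqP.
rewrite (bigD1 i) //= ti big1 ?addr0 // => j ji.
by case tj: (cls t j) => //; rewrite (cls_uniq tj ti) eqxx in ji.
Qed.

Lemma dnum_gt0 j : (0 < dnum mul S (sig j))%N.
Proof. by rewrite card_gt0; apply/set0Pn; exists (sig j); rewrite inE. Qed.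

Local Notation ZM := (malg int mulA mul1m mulm1).

Definition class_idempotents (E : 'I_p -> ZM) : Prop :=
  [/\ forall t j, chi t (E j) = (cls t j)%:R,
      forall j, E j * E j = E j,
      forall i j, i != j -> E i * E j = 0 &
      \sum_j E j = 1].

Section Algorithm.
Variable E : 'I_p -> {ffun T -> int}.
Variables (lt lk : 'I_p -> seq T) (a b : 'I_p -> nat).
Hypotheses (lt_enum : forall j, perm_eq (lt j) (enum (LS mul S (sig j))))
  (lk_enum : forall j, perm_eq (lk j) (enum (S :\: LS mul S (sig j))))
  (a_large : forall j, (#|T| - dnum mul S (sig j) <= a j)%N)
  (b_large : forall j, (dnum mul S (sig j) <= b j)%N)
  (E_def : forall j, E j = Pab mul e (a j) (b j)
                              (Qterm mul (Tterm mul e (lt j) (lk j)) E j)).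

Definition Ez (j : 'I_p) : ZM := E j.
Definition Tz (j : 'I_p) : ZM := Tterm mul e (lt j) (lk j).
Definition Qz (j : 'I_p) : ZM := Qterm mul (Tterm mul e (lt j) (lk j)) E j.
Definition Fz (j : 'I_p) : ZM := \sum_(i < p | (i < j)%N) Ez i.

Lemma Ez_Ppoly j : Ez j = Ppoly (Qz j) (a j) (b j).
Proof. by rewrite /Ez E_def /Pab !malg_powE. Qed.

Lemma a_gt0 t j : ~~ cls t j -> (0 < a j)%N.
Proof.
move=> tj; apply: leq_trans (a_large j); rewrite subn_gt0 /dnum -/(cls _ j).
rewrite -(cardsC [set t | cls t j]) -{1}[#|[set t | cls t j]|]addn0 ltn_add2l card_gt0.
by apply/set0Pn; exists t; rewrite !inE.
Qed.

(* chi_t(T_j) = 1 iff L^S_t = L^S_{sigma_j}: the factors tau in L^S_{sigma_j}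
   require S-elements of L_t, the factors e - kappa forbid the others. *)
Lemma chi_Tz t j : chi t (Tz j) = (cls t j)%:R.
Proof.
have prod_ind (l : seq T) (P : pred T) : \prod_(u <- l) ((P u)%:R : int) = (all P l)%:R.
  by elim: l => [|u l IH]; rewrite ?big_nil ?big_cons //= IH -natrM mulnb.
rewrite /Tz /Tterm -malg_mulE !malg_prodE rmorphM !rmorph_prod !big_map /=.
under eq_bigr do rewrite chi_basis.
have chi_co_basis u : chi t (1 - basis int u) = (mul t u != t)%:R.
  by rewrite rmorphB rmorph1 /= chi_basis; case: (_ == _).
under [X in _ * X]eq_bigr do rewrite chi_co_basis.
rewrite !prod_ind -natrM mulnb (perm_all _ (lt_enum j)) (perm_all _ (lk_enum j)).
congr (nat_of_bool _)%:R; apply/andP/eqP => [[/allP inL /allP outL]|eqLS].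
  apply/setP => u; rewrite !inE; case uS: (u \in S); rewrite ?andbF ?andbT //.
  case ju: (mul (sig j) u == sig j); first by apply: inL; rewrite mem_enum !inE ju uS.
  by apply/negbTE/outL; rewrite mem_enum !inE uS ju.
split; apply/allP => u; rewrite mem_enum; first by rewrite -eqLS !inE => /andP [].
by rewrite in_setD -eqLS !inE => /andP [hu uS]; rewrite uS andbT in hu.
Qed.

Lemma Qz_sandwich j : Qz j = (1 - Fz j) * Tz j * (1 - Fz j).
Proof.
have reorder (x y z w : ZM) : x - y - (w - z) = x - w - y + z.
  by rewrite opprB addrA addrAC [x - y - w]addrAC.
rewrite mulrBr mulr1 !mulrBl !mul1r reorder.
rewrite /Fz mulr_suml mulr_sumr mulr_suml.
by under [X in _ + X]eq_bigr do rewrite mulr_sumr.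
Qed.

Definition invariant (j : 'I_p) : Prop :=
  [/\ forall t, chi t (Ez j) = (cls t j)%:R, Ez j * Ez j = Ez j &
      forall i : 'I_p, (i < j)%N -> Ez i * Ez j = 0 /\ Ez j * Ez i = 0].

Lemma invariant_orth (i k : 'I_p) : invariant i -> invariant k -> i != k ->
  Ez i * Ez k = 0.
Proof.
move=> [_ _ orth_i] [_ _ orth_k]; case: (ltngtP i k) => [ik _|ki _|/val_inj ->].
- by have [] := orth_k i ik.
- by have [] := orth_i k ki.
- by rewrite eqxx.
Qed.

Section Step.
Variable j : 'I_p.
Hypothesis before : forall i : 'I_p, (i < j)%N -> invariant i.

Lemma Fz_absorb (i : 'I_p) : (i < j)%N -> Ez i * Fz j = Ez i /\ Fz j * Ez i = Ez i.
Proof.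
have orth (k k' : 'I_p) : (k < j)%N -> (k' < j)%N -> k != k' -> Ez k * Ez k' = 0.
  by move=> kj k'j; apply: invariant_orth; apply: before.
move=> ij; have [_ idem _] := before ij; rewrite /Fz mulr_sumr mulr_suml.
by split; rewrite (bigD1 i) //= big1 ?addr0 // => k /andP [kj ki];
  apply: orth; rewrite // eq_sym.
Qed.

Lemma Qz_annihilated (i : 'I_p) : (i < j)%N -> Ez i * Qz j = 0 /\ Qz j * Ez i = 0.
Proof.
move=> ij; have [EF FE] := Fz_absorb ij; rewrite Qz_sandwich; split.
  by rewrite !mulrA [Ez i * _]mulrBr mulr1 EF subrr !mul0r.
by rewrite -!mulrA [_ * Ez i]mulrBl mul1r FE subrr !mulr0.
Qed.

(* chi_t(Q_j) = chi_t(T_j), since chi_t(F_j) = 0 on the j-th class. *)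
Lemma chi_Qz t : chi t (Qz j) = (cls t j)%:R.
Proof.
rewrite Qz_sandwich 2!rmorphM rmorphB rmorph1 /= chi_Tz.
case tj: (cls t j); last by rewrite mulr0 mul0r.
rewrite /Fz rmorph_sum big1 ?subr0 ?mul1r //= => i ij.
have [-> _ _] := before ij; case ti: (cls t i) => //.
by move: ij; rewrite (cls_uniq ti tj) ltnn.
Qed.

(* The invariant at step j: E_j = P_{a,b}(Q_j) has the characters of Q_j
   (a_j, b_j > 0 where needed), is idempotent by the nilpotency lemma
   (a_j >= n - d_j, b_j >= d_j), and inherits the annihilators of Q_j. *)
Lemma invariant_step : invariant j.
Proof.
split.
- move=> t; rewrite Ez_Ppoly rmorph_Ppoly /= chi_Qz /Ppoly; case tj: (cls t j).
    by rewrite expr1n subrr expr0n gtn_eqF ?subr0 // (leq_trans (dnum_gt0 j) (b_large j)).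
  have := a_gt0 (negbT tj); rewrite lt0n => /negbTE a0.
  by rewrite expr0n a0 subr0 expr1n subrr.
- rewrite Ez_Ppoly; apply/Ppoly_idem/(nilpotent (c := cls^~ j)).
  + exact: chi_Qz.
  + exact: a_large.
  + exact: b_large.
- move=> i ij; have a0 : (0 < a j)%N.
    apply: (a_gt0 (t := sig i)); rewrite cls_sig.
    by apply: contraTneq ij => ->; rewrite ltnn.
  have [EQ QE] := Qz_annihilated ij.
  rewrite (Ez_Ppoly j); split; first exact: Ppoly_annihilated_l.
  exact: Ppoly_annihilated_r.
Qed.

End Step.

Lemma invariant_all j : invariant j.
Proof.
have [n] := ubnP (val j); elim: n j => // n IH j jn.
by apply: invariant_step => i ij; apply: IH; exact: leq_trans ij jn.
Qed.

(* The sum of the E_j is an idempotent on which all characters vanish, up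
   to 1: so 1 - sum E_j = 0. *)
Lemma algorithm_class_idempotents : class_idempotents Ez.
Proof.
have orth i j : i != j -> Ez i * Ez j = 0 by apply: invariant_orth; apply: invariant_all.
have idem j : Ez j * Ez j = Ez j by have [] := invariant_all j.
have chiE t j : chi t (Ez j) = (cls t j)%:R by have [] := invariant_all j.
split => //; set s := \sum_j Ez j.
have s_idem : s * s = s.
  rewrite {1}/s mulr_suml; apply: eq_bigr => i _; rewrite /s mulr_sumr.
  by rewrite (bigD1 i) //= idem big1 ?addr0 // => k ki; rewrite orth // eq_sym.
apply/esym/subr0_eq/idem_chi0.
  by rewrite mulrBl mul1r mulrBr mulr1 s_idem subrr subr0.
move=> t; rewrite rmorphB rmorph1 rmorph_sum /=.
by under eq_bigr do rewrite chiE; rewrite cls_partition subrr.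
Qed.

End Algorithm.

Section Transfer.
Variable R : nzRingType.
Local Notation RM := (malg R mulA mul1m mulm1).

Definition theta (f : ZM) : RM := malg_cast R f.

Lemma theta_is_zmod_morphism : zmod_morphism theta.
Proof. by move=> f g; apply/ffunP => m; rewrite !ffunE rmorphB. Qed.

Lemma theta_is_monoid_morphism : monoid_morphism theta.
Proof.
split; first by apply/ffunP => m; rewrite !ffunE; case: (m == e).
move=> f g; apply/ffunP => m; rewrite ffunE !malg_mulE !malg_mul_coef rmorph_sum.
apply: eq_bigr => s _; rewrite rmorph_sum; apply: eq_bigr => t _; rewrite !ffunE.
by case: (mul s t == m); rewrite ?rmorphM ?rmorph0.
Qed.

HB.instance Definition _ := GRing.isZmodMorphism.Build ZM RM theta theta_is_zmod_morphism.
HB.instance Definition _ :=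
  GRing.isMonoidMorphism.Build ZM RM theta theta_is_monoid_morphism.

Lemma chi_theta t (f : ZM) : chi t (theta f) = (chi t f)%:~R.
Proof. by rewrite /chi rmorph_sum; apply: eq_bigr => s _; rewrite ffunE. Qed.

Lemma theta_scal_comm (f : ZM) r : theta f * scal r = scal r * theta f.
Proof.
by apply/ffunP => m; rewrite mul_scal_coef scal_mul_coef ffunE; apply/esym/commr_int.
Qed.

Variable E : 'I_p -> ZM.
Hypothesis E_class : class_idempotents E.
Variables (q : nat) (eps : 'I_q -> R).
Hypothesis eps_cspoi : cspoi *%R (1 : R) eps.

Definition Pij (k : 'I_q * 'I_p) : RM := scal (eps k.1) * theta (E k.2).

Lemma chi_Pij t k : chi t (Pij k) = eps k.1 * (cls t k.2)%:R.
Proof.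
have [chiE _ _ _] := E_class.
by rewrite rmorphM /= chi_scal chi_theta chiE; case: (cls t k.2).
Qed.

(* eps_i Theta(E_j) is nonzero, as its character at sigma_j is eps_i. *)
Lemma Pij_neq0 k : Pij k <> 0.
Proof.
have [eps_neq0 _ _ _ _] := eps_cspoi; move=> /(congr1 (chi (sig k.2))).
by rewrite chi_Pij cls_sig eqxx mulr1 rmorph0; apply: eps_neq0.
Qed.

(* An idempotent X absorbed by P_ij whose character at sigma_j vanishes is
   zero: its other characters vanish too, since chi_t(P_ij) = 0 off the
   j-th class and chi_t = chi_{sigma_j} on it. *)
Lemma absorbed_idem_zero k (X : RM) : X * X = X -> X * Pij k = X ->
  chi (sig k.2) X = 0 -> X = 0.
Proof.
move=> Xidem XP chiX0; apply: idem_chi0 => // t; rewrite -XP rmorphM /= chi_Pij.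
case tk: (cls t k.2); last by rewrite !mulr0.
by rewrite (chi_LS X (eqP tk)) chiX0 mul0r.
Qed.

(* Primitivity: a splitting X + Y of P_ij induces, through chi_{sigma_j},
   a splitting of eps_i in R; primitivity of eps_i kills one side. *)
Lemma Pij_primitive k : primitive_idem (malg_mul mul) (Pij k).
Proof.
have [_ _ _ eps_prim _] := eps_cspoi.
move=> X Y; rewrite -!malg_mulE => Xidem Yidem XY0 YX0 PXY.
have XP : (X : RM) * Pij k = X by rewrite PXY mulrDr Xidem XY0 addr0.
have YP : (Y : RM) * Pij k = Y by rewrite PXY mulrDr Yidem YX0 add0r.
have := eps_prim k.1 (chi (sig k.2) (X : RM)) (chi (sig k.2) (Y : RM)).
rewrite -!rmorphM /= Xidem Yidem XY0 YX0 rmorph0.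
move=> /(_ erefl erefl erefl erefl) [].
- by rewrite -rmorphD /= -PXY chi_Pij cls_sig eqxx mulr1.
- by move=> chiX0; left; apply: absorbed_idem_zero Xidem XP chiX0.
- by move=> chiY0; right; apply: absorbed_idem_zero Yidem YP chiY0.
Qed.

Lemma transfer_cspoi : cspoi (malg_mul mul) (1 : RM) Pij.
Proof.
have [_ Eidem Eorth Esum] := E_class.
have [_ eps_idem eps_orth _ eps_sum] := eps_cspoi.
have scal_idem i : scal (eps i) * scal (eps i) = scal (eps i).
  by rewrite -rmorphM eps_idem.
have scal_orth i i' : i != i' -> scal (eps i) * scal (eps i') = 0.
  by move=> /eqP ii'; rewrite -rmorphM eps_orth ?rmorph0.
have scal_sum : \sum_i scal (eps i) = 1 by rewrite -rmorph_sum eps_sum rmorph1.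
have theta_idem j : theta (E j) * theta (E j) = theta (E j).
  by rewrite -rmorphM Eidem.
have theta_orth j j' : j != j' -> theta (E j) * theta (E j') = 0.
  by move=> jj'; rewrite -rmorphM Eorth ?rmorph0.
have theta_sum : \sum_j theta (E j) = 1 by rewrite -rmorph_sum Esum rmorph1.
have [Pidem Porth Psum] := orthogonal_products scal_idem scal_orth scal_sum
  theta_idem theta_orth theta_sum (fun i j => theta_scal_comm _ _).
split=> //; [exact: Pij_neq0 | by move=> k k' /eqP; apply: Porth | exact: Pij_primitive].
Qed.

End Transfer.

End Classes.

End MonoidAlgebra.

Theorem mainTheorem10
  (T : finType) (mul : T -> T -> T) (e : T)
  (Hassoc : associative mul) (He_l : left_id e mul) (He_r : right_id e mul)
  (HRtriv : R_trivial mul)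
  (S : {set T}) (HS : generates mul e S)
  (p : nat) (sig : 'I_p -> T) (Hsig : representatives mul S sig)
  (E : 'I_p -> {ffun T -> int}) (HE : algorithm_output mul e S sig E)
  (R : nzRingType) (q : nat) (eps : 'I_q -> R)
  (Heps : cspoi ( *%R ) (1 : R) eps) :
  cspoi (malg_mul mul) (@malg_one T e R)
    (fun ij : 'I_q * 'I_p =>
       malg_mul mul (malg_scal e (eps ij.1)) (malg_cast R (E ij.2))).
Proof.
have [lt [lk [a [b [lt_enum lk_enum a_large b_large E_def]]]]] := HE.
have E_class := algorithm_class_idempotents Hassoc He_l He_r HRtriv Hsig lt_enum lk_enum
  a_large b_large E_def.
exact (transfer_cspoi HRtriv HS Hsig E_class Heps).
Qed.
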